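(* Let $F,\theta \geq 1$ be integers with $F \geq 4\theta$, and let $p_j = \binom{F}{j} 2^{-F}$ for $j = 0,\ldots,F$. Then $$\sum_{j \leq \theta} (-j)\, p_j + \sum_{\theta < j \leq F} \big(j + 2(1 - j/F - \theta)\big) p_j > 0.$$
   Context: This quantity is the expected value $E\phi(e)$ of the weight $\phi(e) = -\zeta_0(e)$ if $\zeta_0(e) \leq \theta$ and $\phi(e) = \zeta_0(e) + 2(X - \theta)$ otherwise, where $\zeta_0(e) \sim \mathrm{Binomial}(F,1/2)$ and, given $\zeta_0(e)$, $X$ is Bernoulli$(1 - \zeta_0(e)/F)$. *)

From mathcomp Require Import all_boot all_order all_algebra.
Set Implicit Arguments. Unset Strict Implicit. Unset Printing Implicit Defensive.
Import Order.TTheory GRing.Theory Num.Theory.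
Local Open Scope ring_scope.

Definition pj (F j : nat) : rat := ('C(F, j))%:R / 2%:R ^+ F.

(* The weight of [j] is at least [j - 2 theta] (for [j > theta] because
   [j / F <= 1]), strictly so at [j = 0], and the Binomial(F, 1/2) mean of
   [j - 2 theta] is [F/2 - 2 theta >= 0]. *)
From mathcomp Require Import all_boot all_order all_algebra.
From mathcomp Require Import lra zify.
Import Order.TTheory GRing.Theory Num.Theory.
Local Open Scope ring_scope.

Lemma sum_binomial (n : nat) : (\sum_(0 <= j < n.+1) 'C(n, j) = 2 ^ n)%N.
Proof.
rewrite big_mkord -[2%N]/(1 + 1)%N expnDn; apply: eq_bigr => i _.
by rewrite !exp1n !muln1.
Qed.

Lemma sum_mul_binomial (n : nat) :
  (2 * \sum_(0 <= j < n.+1) j * 'C(n, j) = n * 2 ^ n)%N.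
Proof.
case: n => [|n]; first by rewrite big_nat1.
have -> : (\sum_(0 <= j < n.+2) j * 'C(n.+1, j) = n.+1 * 2 ^ n)%N.
  rewrite big_nat_recl // mul0n add0n -sum_binomial big_distrr /=.
  by apply: eq_bigr => j _; rewrite -mul_bin_diag.
by rewrite expnS mulnCA.
Qed.

Lemma pj_ge0 (F j : nat) : 0 <= pj F j.
Proof. by rewrite /pj divr_ge0 // exprn_ge0. Qed.

Lemma pj0_gt0 (F : nat) : 0 < pj F 0.
Proof. by rewrite /pj bin0 divr_gt0 // exprn_gt0. Qed.

Lemma sum_pj (F : nat) : \sum_(0 <= j < F.+1) pj F j = 1.
Proof.
rewrite -mulr_suml -natr_sum sum_binomial natrX divff //.
by rewrite expf_neq0 // pnatr_eq0.
Qed.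

Lemma sum_mul_pj (F : nat) :
  \sum_(0 <= j < F.+1) j%:R * pj F j = F%:R / 2%:R :> rat.
Proof.
have two_neq0 : 2%:R != 0 :> rat by rewrite pnatr_eq0.
have sum_nat : \sum_(0 <= j < F.+1) (j * 'C(F, j))%:R = F%:R * 2%:R ^+ F / 2%:R :> rat.
  apply: (mulIf two_neq0); rewrite divfK // -natr_sum -natrM mulnC.
  by rewrite sum_mul_binomial natrM natrX.
under eq_bigr => j _ do rewrite /pj mulrA -natrM.
by rewrite -mulr_suml sum_nat mulrAC mulfK // expf_neq0.
Qed.

Definition weight (F theta j : nat) : rat :=
  if (j <= theta)%N then - j%:R
  else j%:R + 2%:R * (1 - j%:R / F%:R - theta%:R).

Lemma weight_ge (F theta j : nat) :
  (j <= F)%N -> j%:R - 2%:R * theta%:R <= weight F theta j.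
Proof.
move=> jF; rewrite /weight; case: leqP => hj.
  have : (j%:R : rat) <= theta%:R by rewrite ler_nat.
  lra.
have : (j%:R : rat) / F%:R <= 1.
  by rewrite ler_pdivrMr ?ltr0n ?mul1r ?ler_nat //; lia.
lra.
Qed.

Lemma expected_weight_gt0 (F theta : nat) :
  (1 <= theta)%N -> (4 * theta <= F)%N ->
  0 < \sum_(0 <= j < F.+1) weight F theta j * pj F j.
Proof.
move=> th1 hF.
have shifted_mean : \sum_(0 <= j < F.+1) (j%:R - 2%:R * theta%:R) * pj F j
                    = F%:R / 2%:R - 2%:R * theta%:R :> rat.
  under eq_bigr => j _ do rewrite mulrBl.
  by rewrite sumrB sum_mul_pj -mulr_sumr sum_pj mulr1.
have mean_ge0 : 0 <= F%:R / 2%:R - 2%:R * theta%:R :> rat.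
  have : (4 * theta)%:R <= F%:R :> rat by rewrite ler_nat.
  rewrite natrM; lra.
apply: (le_lt_trans mean_ge0); rewrite -shifted_mean !big_nat_recl //.
apply: ltr_leD.
  by rewrite /weight leq0n oppr0 mul0r pmulr_llt0 ?pj0_gt0 // sub0r oppr_lt0
    mulr_gt0 // ltr0n.
rewrite !big_nat; apply: ler_sum => j /andP [_ jF].
by rewrite ler_wpM2r ?pj_ge0 // weight_ge.
Qed.

Theorem lemma5 (F theta : nat) :
  (1 <= F)%N -> (1 <= theta)%N -> (4 * theta <= F)%N ->
  0 < \sum_(0 <= j < F.+1 | (j <= theta)%N) (- (j%:R : rat)) * pj F j
      + \sum_(0 <= j < F.+1 | (theta < j)%N)
          ((j%:R : rat) + 2%:R * (1 - j%:R / F%:R - theta%:R)) * pj F j.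
Proof.
move=> _ th1 hF.
rewrite (big_mkcond (fun j => (j <= theta)%N)) (big_mkcond (fun j => (theta < j)%N)).
rewrite -big_split (eq_bigr (fun j => weight F theta j * pj F j)) /=.
  exact: expected_weight_gt0.
by move=> j _; rewrite /weight ltnNge; case: leqP => _; rewrite ?addr0 ?add0r.
Qed.
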